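(* Let $n\ge 1$ and $d\ge 0$. Consider the set $\mathcal B_{n,d}$ of all directed multigraphs with output pair $H=(V,E,(a,b))$, taken up to isomorphism, such that $|V|\le \min\{n,2+2d\}$, $|E|\le d$, and no node of $V\setminus\{a,b\}$ is isolated. Then $\{P_H : H\in\mathcal B_{n,d}\}$ is a basis of the real vector space of all $S_n$-equivariant polynomial maps $P:\mathbb R^{n\times n}\to\mathbb R^{n\times n}$ of degree at most $d$.
   Context: A directed multigraph with output pair is $H=(V,E,(a,b))$ with $V=[m]=\{1,\dots,m\}$, $E$ a finite multiset of ordered pairs $(r,s)\in V\times V$ (parallel edges and self-loops allowed), and $a,b\in V$ a distinguished, not necessarily distinct, pair called the red edge (it is not an element of $E$). A node is isolated if no edge of $E$ is incident to it. Two such multigraphs are isomorphic if there is a bijection of node sets carrying the edge multiset onto the edge multiset (with multiplicities) and the red pair $(a,b)$ onto the red pair. For $X\in\mathbb R^{n\times n}$, $P_H(X)\in\mathbb R^{n\times n}$ is defined by $P_H(X)_{i_a,i_b}=\sum_{j\in[n]^m,\ j_a=i_a,\ j_b=i_b}\ \prod_{(r,s)\in E}X_{j_r,j_s}$ (product over $E$ with multiplicity; empty product $=1$); if $a=b$ this formula defines the diagonal entries and all off-diagonal entries of $P_H(X)$ are $0$. The symmetric group $S_n$ acts on $\mathbb R^{n\times n}$ by $(g\cdot X)_{ij}=X_{g^{-1}(i),g^{-1}(j)}$. A polynomial map $P:\mathbb R^{n\times n}\to\mathbb R^{n\times n}$ (each entry a polynomial in the entries of $X$) is equivariant if $P(g\cdot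 X)=g\cdot P(X)$ for all $g\in S_n$ and all $X$. *)

From HB Require Import structures.
From mathcomp Require Import all_boot all_order all_algebra all_fingroup.
From mathcomp Require Import reals.
Set Implicit Arguments. Unset Strict Implicit. Unset Printing Implicit Defensive.
Import Order.TTheory GRing.Theory Num.Theory.
Local Open Scope ring_scope.

(* A directed multigraph with output pair: nodes 'I_m (i.e. {0,...,m-1}),
   edge multiset represented by a list (order irrelevant, multiplicity kept),
   red pair (a, b). *)
Record mgraph := MGraph {
  mg_m : nat;
  mg_E : seq ('I_mg_m * 'I_mg_m);
  mg_a : 'I_mg_m;
  mg_b : 'I_mg_m }.

Definition mg_iso (H1 H2 : mgraph) : Prop :=
  exists f : 'I_(mg_m H1) -> 'I_(mg_m H2),
    [/\ bijective f,
        perm_eq [seq (f e.1, f e.2) | e <- mg_E H1] (mg_E H2),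
        f (mg_a H1) = mg_a H2 &
        f (mg_b H1) = mg_b H2].

Definition mg_isolated (H : mgraph) (v : 'I_(mg_m H)) : bool :=
  ~~ has (fun e => (e.1 == v) || (e.2 == v)) (mg_E H).

(* Membership in B_{n,d} (before quotienting by isomorphism). *)
Definition inB (n d : nat) (H : mgraph) : Prop :=
  [/\ (mg_m H <= minn n (2 + 2 * d))%N,
      (size (mg_E H) <= d)%N &
      forall v : 'I_(mg_m H), v != mg_a H -> v != mg_b H -> ~~ mg_isolated v].

(* P_H(X)_{i,k} = sum over j : V -> [n] with j a = i, j b = k of
   prod_{(r,s) in E} X_{j r, j s}.  When a = b and i <> k the sum is empty,
   so off-diagonal entries are 0, as in the definition. *)
Definition PH (R : realType) (n : nat) (H : mgraph) (X : 'M[R]_n) : 'M[R]_n :=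
  \matrix_(i < n, k < n)
    \sum_(phi : {ffun 'I_(mg_m H) -> 'I_n} |
            (phi (mg_a H) == i) && (phi (mg_b H) == k))
      \prod_(e <- mg_E H) X (phi e.1) (phi e.2).

Definition Sact (R : realType) (n : nat) (g : 'S_n) (X : 'M[R]_n) : 'M[R]_n :=
  \matrix_(i < n, j < n) X ((g^-1)%g i) ((g^-1)%g j).

Definition equivariant (R : realType) (n : nat) (P : 'M[R]_n -> 'M[R]_n) : Prop :=
  forall (g : 'S_n) (X : 'M[R]_n), P (Sact g X) = Sact g (P X).

Definition monomial (R : realType) (n : nat)
    (alpha : {ffun 'I_n * 'I_n -> nat}) (X : 'M[R]_n) : R :=
  \prod_(ij : 'I_n * 'I_n) X ij.1 ij.2 ^+ alpha ij.

Definition mdeg (n : nat) (alpha : {ffun 'I_n * 'I_n -> nat}) : nat :=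
  (\sum_(ij : 'I_n * 'I_n) alpha ij)%N.

Definition poly_fun_deg_le (R : realType) (n d : nat) (f : 'M[R]_n -> R) : Prop :=
  exists s : seq (R * {ffun 'I_n * 'I_n -> nat}),
    all (fun p => (mdeg p.2 <= d)%N) s /\
    forall X, f X = \sum_(p <- s) p.1 * monomial p.2 X.

Definition polymap_deg_le (R : realType) (n d : nat) (P : 'M[R]_n -> 'M[R]_n) : Prop :=
  forall i j : 'I_n, poly_fun_deg_le d (fun X => P X i j).

From mathcomp Require Import all_boot all_algebra all_fingroup.
From mathcomp Require Import reals.
From mathcomp Require Import zify.
Import GRing.Theory Num.Theory.

(* Independence: substituting X_(u,v) := t ^+ (K ^ rank (u,v)) with K = d+1 sends
   every monomial of degree <= d to its own power of t.  Fix an embedding w of a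
   graph G of B_{n,d} into [n]; a map phi of another H contributes to the
   coefficient of the power of t coming from w exactly when phi carries the edges
   and red pair of H onto those of w G, and since G has no isolated nodes this
   forces H to have at least as many nodes as G, with equality only if H ~ G.
   Among the graphs with nonzero coefficient, one with the most nodes therefore
   has an isolated coefficient.

   Spanning: by Reynolds averaging over S_n an equivariant P is a combination of
   sums of monomials over injective node maps, i.e. of the injective versions
   PHinj of P_H for graphs on n nodes.  Inclusion-exclusion over pairs of nodes
   that may coincide expresses P_H - PHinj H through graphs with two nodes
   merged, and an isolated node other than a, b only multiplies PHinj by
   n - (m - 1); induction on the number of nodes finishes, the node bound of
   B_{n,d} being automatic once no node is isolated. *)

Set Implicit Arguments. Unset Strict Implicit. Unset Printing Implicit Defensive.

Lemma eq_base_expansion K N (a b : 'I_N -> nat) : 0 < K ->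
  (forall o, a o < K) -> (forall o, b o < K) ->
  \sum_(o < N) a o * K ^ o = \sum_(o < N) b o * K ^ o -> a =1 b.
Proof.
move=> K_gt0; elim: N a b => [|N IH] a b ha hb + o; first by case: o.
rewrite !big_ord_recl /= !expn0 !muln1.
have shift (f : 'I_N.+1 -> nat) :
    \sum_(i < N) f (lift ord0 i) * K ^ lift ord0 i =
    K * \sum_(i < N) f (lift ord0 i) * K ^ i.
  by rewrite big_distrr; apply: eq_bigr => i _; rewrite /= /bump add1n expnS mulnCA.
rewrite !shift => eq_sum.
have eq0 : a ord0 = b ord0.
  have := congr1 (modn^~ K) eq_sum.
  by rewrite (addnC (a ord0)) (addnC (b ord0)) ![K * _]mulnC !modnMDl !modn_small.
have eq_tail : \sum_(i < N) a (lift ord0 i) * K ^ i = \sum_(i < N) b (lift ord0 i) * K ^ i.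
  by move: eq_sum; rewrite eq0 => /addnI /eqP; rewrite eqn_mul2l eqn0Ngt K_gt0 => /eqP.
have := IH _ _ (fun i => ha _) (fun i => hb _) eq_tail.
by case: (unliftP ord0 o) => [j ->|->].
Qed.

Lemma sum_exp_enum_rank (A : Type) (T : finType) K (f : A -> T) (s : seq A) :
  \sum_(x <- s) K ^ enum_rank (f x) =
  \sum_(o < #|{: T}|) count_mem (enum_val o) (map f s) * K ^ o.
Proof.
elim: s => [|x s IH]; first by rewrite big_nil big1.
rewrite big_cons IH /=; under [RHS]eq_bigr do rewrite mulnDl.
rewrite big_split /=; congr (_ + _).
rewrite (bigD1 (enum_rank (f x))) //= enum_rankK eqxx mul1n big1 ?addn0 // => o ho.
by case: eqP => [fx|]; [move: ho; rewrite fx enum_valK eqxx | rewrite mul0n].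
Qed.

Lemma perm_eq_sum_exp_enum_rank (A B : Type) (T : finType) K (f : A -> T) (g : B -> T)
    (s1 : seq A) (s2 : seq B) : size s1 < K -> size s2 < K ->
  \sum_(x <- s1) K ^ enum_rank (f x) = \sum_(y <- s2) K ^ enum_rank (g y) ->
  perm_eq (map f s1) (map g s2).
Proof.
move=> s1K s2K; rewrite !sum_exp_enum_rank => /eq_base_expansion eq_count.
apply/allP => t _; apply/eqP; rewrite -(enum_rankK t).
apply: eq_count => [|o|o]; first exact: leq_ltn_trans s1K.
  by apply: leq_ltn_trans (count_size _ _) _; rewrite size_map.
by apply: leq_ltn_trans (count_size _ _) _; rewrite size_map.
Qed.

Lemma mg_m_le_size_E (H : mgraph) :
  (forall v, v != mg_a H -> v != mg_b H -> ~~ mg_isolated v) ->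
  mg_m H <= 2 + 2 * size (mg_E H).
Proof.
move=> not_isolated.
set ends := [seq e.1 | e <- mg_E H] ++ [seq e.2 | e <- mg_E H].
have cover : [set: 'I_(mg_m H)] \subset [set mg_a H; mg_b H] :|: [set x in ends].
  apply/subsetP => v _; rewrite !inE.
  case: (eqVneq v (mg_a H)) => //= va; case: (eqVneq v (mg_b H)) => //= vb.
  have /hasP [e eE /orP [] /eqP <-] := negbNE (not_isolated v va vb).
    by rewrite mem_cat map_f.
  by rewrite mem_cat map_f ?orbT.
have := subset_leq_card cover; rewrite cardsT card_ord => le_m.
apply: leq_trans le_m _.
rewrite cardsU cards2; apply: leq_trans (leq_subr _ _) _.
apply: leq_add; first by case: (_ != _).
by rewrite cardsE (leq_trans (card_size _)) // size_cat !size_map mul2n addnn.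
Qed.

Definition mg_image (H : mgraph) m (g : 'I_(mg_m H) -> 'I_m) : mgraph :=
  @MGraph m [seq (g e.1, g e.2) | e <- mg_E H] (g (mg_a H)) (g (mg_b H)).

Definition offdiag m : {set 'I_m * 'I_m} := [set p | p.1 != p.2].

Section Merge.
Variables (m : nat) (u v : 'I_m).
Hypothesis uv : u != v.

Lemma merge_subproof (x : 'I_m) : unbump v (if x == v then u else x) < m.-1.
Proof.
set y := if x == v then u else x.
have yv : (y : nat) != v by rewrite /y; case: (eqVneq x v) => // _.
have := ltn_ord y; have := ltn_ord v; rewrite /unbump.
by case vy: (v < y); move: vy yv; lia.
Qed.

(* Identifies the node [v] with [u]; nodes above [v] are renumbered down by one. *)
Definition merge (x : 'I_m) : 'I_m.-1 := Ordinal (merge_subproof x).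

Lemma lift_merge x : lift v (merge x) = if x == v then u else x.
Proof.
apply: val_inj => /=; rewrite /bump /unbump.
set y := if x == v then u else x.
have yv : (y : nat) != v by rewrite /y; case: (eqVneq x v) => // _.
case vy: (v < y); case vy': (v <= y - _); move: vy vy' yv; lia.
Qed.

Lemma merge_lift y : merge (lift v y) = y.
Proof. by apply: val_inj; rewrite /= eq_sym (negbTE (neq_lift v y)) bumpK. Qed.

Lemma merge_id x : x != v -> lift v (merge x) = x.
Proof. by rewrite lift_merge => /negbTE ->. Qed.

Lemma merge_uv : merge u = merge v.
Proof. by apply: (@lift_inj _ v); rewrite !lift_merge eqxx (negbTE uv). Qed.

Lemma merge_offdiag_sub (T : {set 'I_m * 'I_m}) : T \subset offdiag m ->
    (u, v) \notin T -> (v, u) \notin T ->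
  [set (merge q.1, merge q.2) | q in T] \subset offdiag m.-1.
Proof.
move=> T_sub uvT vuT; apply/subsetP => _ /imsetP [[x y] xyT ->]; rewrite inE /=.
have xy : x != y by have := subsetP T_sub _ xyT; rewrite inE.
apply/negP => /eqP /(congr1 (lift v)); rewrite !lift_merge.
case: (eqVneq x v) xyT xy => [->|_]; case: (eqVneq y v) => [->|_] xyT xy.
- by [].
- by move=> uy; move: vuT; rewrite uy xyT.
- by move=> xu; move: uvT; rewrite -xu xyT.
- by move=> eq_xy; rewrite eq_xy eqxx in xy.
Qed.

End Merge.

Section EmbeddingMatch.
Variables (n : nat) (H G : mgraph) (phi : 'I_(mg_m H) -> 'I_n).
Hypothesis G_le_n : mg_m G <= n.
Local Notation w := (widen_ord G_le_n).
Hypotheses (G_not_isolated :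
              forall v, v != mg_a G -> v != mg_b G -> ~~ mg_isolated v)
           (phi_a : phi (mg_a H) = w (mg_a G))
           (phi_b : phi (mg_b H) = w (mg_b G))
           (phi_E : perm_eq [seq (phi e.1, phi e.2) | e <- mg_E H]
                            [seq (w e.1, w e.2) | e <- mg_E G]).

Lemma widen_ord_inj : injective w.
Proof. by move=> x y /(congr1 val) /= /val_inj. Qed.

Lemma widen_in_codom v : w v \in codom phi.
Proof.
case: (eqVneq v (mg_a G)) => [->|va]; first by rewrite -phi_a codom_f.
case: (eqVneq v (mg_b G)) => [->|vb]; first by rewrite -phi_b codom_f.
have /hasP [e eE ve] := negbNE (G_not_isolated va vb).
have : (w e.1, w e.2) \in [seq (phi e.1, phi e.2) | e <- mg_E H].
  by rewrite (perm_mem phi_E) map_f.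
case/mapP => e' _ [e1 e2].
by case/orP: ve => /eqP <-; rewrite ?e1 ?e2 codom_f.
Qed.

Lemma codom_widen_sub : [set x in codom w] \subset [set x in codom phi].
Proof. by apply/subsetP => x; rewrite !inE => /codomP [v ->]; apply: widen_in_codom. Qed.

Lemma card_codom_widen : #|[set x in codom w]| = mg_m G.
Proof. by rewrite cardsE card_codom ?card_ord //; apply: widen_ord_inj. Qed.

Lemma card_codom_le : #|[set x in codom phi]| <= mg_m H.
Proof. by rewrite cardsE -{2}(card_ord (mg_m H)) -(size_codom phi) card_size. Qed.

Lemma mg_m_le_of_match : mg_m G <= mg_m H.
Proof.
by rewrite -card_codom_widen (leq_trans (subset_leq_card codom_widen_sub) card_codom_le).
Qed.

(* With as many nodes as [G], [phi] is a bijection onto the image of [G]. *)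
Lemma mg_iso_of_match : mg_m H <= mg_m G -> mg_iso H G.
Proof.
move=> le_HG.
have eq_m : mg_m H = mg_m G by apply/eqP; rewrite eqn_leq le_HG mg_m_le_of_match.
have card_phi : #|[set x in codom phi]| = mg_m G.
  apply/eqP; rewrite eqn_leq -{1}eq_m card_codom_le /=.
  rewrite -{1}card_codom_widen; exact: subset_leq_card codom_widen_sub.
have eq_codom : [set x in codom w] =i [set x in codom phi].
  by apply/subset_cardP; rewrite ?card_codom_widen ?card_phi ?codom_widen_sub.
have phi_inj : injective phi.
  apply/injectiveP/card_uniqP; rewrite size_map -cardE card_ord.
  by change (#|codom phi| = mg_m H); rewrite -cardsE card_phi eq_m.
pose f x : 'I_(mg_m G) := insubd (mg_a G) (val (phi x)).
have wf x : w (f x) = phi x.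
  have : phi x \in [set x in codom w] by rewrite eq_codom inE codom_f.
  rewrite inE => /codomP [v phix]; apply: val_inj.
  by rewrite /= /f insubdK // phix unfold_in /= ltn_ord.
have f_inj : injective f by move=> x y fxy; apply: phi_inj; rewrite -!wf fxy.
exists f; split.
- by apply: inj_card_bij => //; rewrite !card_ord eq_m.
- apply: (@perm_map_inj _ _ (fun p => (w p.1, w p.2))).
    by move=> [x1 x2] [y1 y2] /= [/val_inj -> /val_inj ->].
  by rewrite -map_comp; apply: etrans phi_E; congr perm_eq; apply: eq_map => e /=; rewrite !wf.
- by apply: widen_ord_inj; rewrite wf phi_a.
- by apply: widen_ord_inj; rewrite wf phi_b.
Qed.

End EmbeddingMatch.

Local Open Scope ring_scope.

Section PolymapEquivariant.
Variables (R : realType) (n : nat).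
Local Notation N := 'I_n.

Definition edge_count m (phi : 'I_m -> N) (E : seq ('I_m * 'I_m)) : {ffun N * N -> nat} :=
  [ffun ij => count_mem ij [seq (phi e.1, phi e.2) | e <- E]].

Lemma prod_edges_monomial m (phi : 'I_m -> N) E (X : 'M[R]_n) :
  \prod_(e <- E) X (phi e.1) (phi e.2) = monomial (edge_count phi E) X.
Proof.
rewrite /monomial; elim: E => [|e E IH].
  by rewrite big_nil big1 // => ij _; rewrite ffunE.
rewrite big_cons IH [RHS](bigD1 (phi e.1, phi e.2)) //= ffunE /= eqxx add1n exprS -mulrA.
rewrite [in LHS](bigD1 (phi e.1, phi e.2)) //= ffunE; congr (_ * (_ * _)).
by apply: eq_bigr => ij ij_neq; rewrite !ffunE /= eq_sym (negbTE ij_neq).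
Qed.

Lemma mdeg_edge_count m (phi : 'I_m -> N) E : mdeg (edge_count phi E) = size E.
Proof.
rewrite /mdeg; elim: E => [|e E IH]; first by apply: big1 => ij _; rewrite ffunE.
under eq_bigr do rewrite ffunE /=.
rewrite big_split /= -IH (bigD1 (phi e.1, phi e.2)) //= eqxx big1 /=; last first.
  by move=> ij ij_neq; rewrite eq_sym (negbTE ij_neq).
by rewrite add1n; congr _.+1; apply: eq_bigr => ij _; rewrite ffunE.
Qed.

Lemma PH_polymap d (H : mgraph) : (size (mg_E H) <= d)%N -> polymap_deg_le d (@PH R n H).
Proof.
move=> size_E i j.
exists [seq (1, edge_count phi (mg_E H)) | phi : {ffun 'I_(mg_m H) -> N} <-
          enum [pred phi : {ffun _} | (phi (mg_a H) == i) && (phi (mg_b H) == j)]].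
split; first by apply/allP => p /mapP [phi _ ->]; rewrite /= mdeg_edge_count.
move=> X; rewrite /PH mxE big_map big_enum_cond /=.
by apply: eq_big => [phi|phi _]; rewrite ?andbT // mul1r prod_edges_monomial.
Qed.

Lemma PH_equivariant (H : mgraph) : equivariant (@PH R n H).
Proof.
move=> g X; apply/matrixP => i k; rewrite /Sact /PH !mxE.
rewrite (reindex_onto (fun psi : {ffun 'I_(mg_m H) -> N} => [ffun x => g (psi x)])
                      (fun phi => [ffun x => (g^-1)%g (phi x)])); last first.
  by move=> phi _; apply/ffunP => x; rewrite !ffunE permKV.
apply: eq_big => [psi|psi _]; last by apply: eq_bigr => e _; rewrite !ffunE !mxE !permK.
rewrite !ffunE !(canF_eq (permK g)).
have -> : [ffun x => (g^-1)%g ([ffun x0 => g (psi x0)] x)] == psi.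
  by apply/eqP/ffunP => x; rewrite !ffunE permK.
by rewrite andbT.
Qed.

End PolymapEquivariant.

Lemma poly_eq0_of_horner (R : numFieldType) (p : {poly R}) :
  (forall t, p.[t] = 0) -> p = 0.
Proof.
move=> p_t; apply/eqP/negPn/negP => p_neq0.
pose rs : seq R := [seq i%:R | i <- iota 0 (size p)].
have rs_roots : all (root p) rs by apply/allP => x /mapP [i _ ->]; apply/rootP.
have rs_uniq : uniq rs.
  by rewrite map_inj_uniq ?iota_uniq // => a b /eqP; rewrite eqr_nat => /eqP.
by have := max_poly_roots p_neq0 rs_roots rs_uniq; rewrite size_map size_iota ltnn.
Qed.

Section Independence.
Variables (R : realType) (n d : nat).
Local Notation N := 'I_n.
Local Notation K := d.+1.

(* Substituting [X_(u,v) := t ^+ (K ^ rank (u,v))] turns the monomial of every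
   edge multiset of size [<= d] into a distinct power of [t]. *)
Definition edge_code m (phi : 'I_m -> N) (E : seq ('I_m * 'I_m)) : nat :=
  \sum_(e <- E) K ^ enum_rank (phi e.1, phi e.2).

Definition code_matrix (t : R) : 'M[R]_n := \matrix_(u, v) t ^+ (K ^ enum_rank (u, v)).

Definition PH_code_poly (H : mgraph) (i k : N) : {poly R} :=
  \sum_(phi : {ffun 'I_(mg_m H) -> N} | (phi (mg_a H) == i) && (phi (mg_b H) == k))
    'X^(edge_code phi (mg_E H)).

Lemma horner_PH_code_poly H i k t : (PH_code_poly H i k).[t] = PH H (code_matrix t) i k.
Proof.
rewrite horner_sum mxE; apply: eq_bigr => phi _.
by rewrite hornerXn -prodrXr; apply: eq_bigr => e _; rewrite mxE.
Qed.

Lemma coef_PH_code_poly H i k j :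
  (PH_code_poly H i k)`_j =
  #|[pred phi : {ffun 'I_(mg_m H) -> N} |
       (phi (mg_a H) == i) && (phi (mg_b H) == k) && (edge_code phi (mg_E H) == j)]|%:R.
Proof.
rewrite coef_sum -sum1_card natr_sum [LHS]big_mkcond [RHS]big_mkcond /=.
apply: eq_bigr => phi _; rewrite coefXn (eq_sym j) unfold_in /=.
by case: (_ && _); case: (_ == j).
Qed.

Section Match.
Variables (H G : mgraph) (G_le_n : (mg_m G <= n)%N).
Hypotheses (H_inB : inB n d H) (G_inB : inB n d G).
Local Notation w := (widen_ord G_le_n).

Lemma coef_PH_code_poly_match :
  (mg_m H <= mg_m G)%N -> ~ mg_iso H G ->
  (PH_code_poly H (w (mg_a G)) (w (mg_b G)))`_(edge_code w (mg_E G)) = 0.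
Proof.
case: H_inB G_inB => _ H_size _ [_ G_size G_not_isolated] HG not_iso.
rewrite coef_PH_code_poly eq_card0 // => phi; rewrite unfold_in /=.
apply/negP => /andP [/andP [/eqP phi_a /eqP phi_b] /eqP phi_code].
apply/not_iso/(mg_iso_of_match G_not_isolated phi_a phi_b _ HG).
exact: (perm_eq_sum_exp_enum_rank (leq_ltn_trans H_size (ltnSn _))
                                  (leq_ltn_trans G_size (ltnSn _)) phi_code).
Qed.

Lemma coef_PH_code_poly_self :
  (PH_code_poly G (w (mg_a G)) (w (mg_b G)))`_(edge_code w (mg_E G)) != 0.
Proof.
rewrite coef_PH_code_poly pnatr_eq0 -lt0n; apply/card_gt0P.
exists [ffun x => w x]; rewrite unfold_in /= !ffunE !eqxx /=.
by apply/eqP/eq_bigr => e _; rewrite !ffunE.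
Qed.
End Match.

Lemma PH_free (k : nat) (Hs : 'I_k -> mgraph) (c : 'I_k -> R) :
  (forall i, inB n d (Hs i)) -> (forall i j, i != j -> ~ mg_iso (Hs i) (Hs j)) ->
  (forall X : 'M[R]_n, \sum_(i < k) c i *: PH (Hs i) X = 0) -> forall i, c i = 0.
Proof.
move=> Hs_inB Hs_iso sum0 i0; apply/eqP/negPn/negP => ci0.
have [j0 cj0 j0_max] := @arg_maxnP _ i0 (fun j => c j != 0) (fun j => mg_m (Hs j)) ci0.
have [G_le _ _] := Hs_inB j0.
have G_le_n : (mg_m (Hs j0) <= n)%N := leq_trans G_le (geq_minl _ _).
pose w := widen_ord G_le_n; pose a := w (mg_a (Hs j0)); pose b := w (mg_b (Hs j0)).
have sum_poly0 : \sum_(j < k) c j *: PH_code_poly (Hs j) a b = 0.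
  apply: poly_eq0_of_horner => t.
  have := congr1 (fun M : 'M[R]_n => M a b) (sum0 (code_matrix t)).
  rewrite summxE mxE => <-; rewrite horner_sum; apply: eq_bigr => j _.
  by rewrite hornerZ horner_PH_code_poly [RHS]mxE.
have := congr1 (fun q : {poly R} => q`_(edge_code w (mg_E (Hs j0)))) sum_poly0.
rewrite coef0 coef_sum (bigD1 j0) //= big1 ?addr0 => [/eqP|j j_neq]; last first.
  rewrite coefZ; have [->|cj] := eqVneq (c j) 0; first by rewrite mul0r.
  rewrite (coef_PH_code_poly_match G_le_n (Hs_inB j) (Hs_inB j0)) ?mulr0 //.
  - exact: j0_max.
  - exact: Hs_iso.
by rewrite coefZ mulf_eq0 (negbTE cj0) (negbTE (coef_PH_code_poly_self _)).
Qed.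

End Independence.

Section Span.
Variables (R : realType) (n d : nat).
Local Notation N := 'I_n.
Local Notation M := 'M[R]_n.

Definition hom_weight (H : mgraph) (X : M) (phi : 'I_(mg_m H) -> N) : R :=
  \prod_(e <- mg_E H) X (phi e.1) (phi e.2).

Definition separates m (phi : 'I_m -> N) (T : {set 'I_m * 'I_m}) : bool :=
  [forall p in T, phi p.1 != phi p.2].

Definition PHsep (H : mgraph) (T : {set 'I_(mg_m H) * 'I_(mg_m H)}) (X : M) : M :=
  \matrix_(i, k) \sum_(phi : {ffun 'I_(mg_m H) -> N} |
      (phi (mg_a H) == i) && (phi (mg_b H) == k) && separates phi T) hom_weight X phi.

Definition PHinj (H : mgraph) (X : M) : M := PHsep (offdiag (mg_m H)) X.

Lemma separatesU1 m (phi : 'I_m -> N) q T :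
  separates phi (q |: T) = (phi q.1 != phi q.2) && separates phi T.
Proof.
apply/forallP/andP => [sep|[sep_q /forallP sep_T] p].
  split; first by have := sep q; rewrite setU11.
  by apply/forallP => p; apply/implyP => pT; have := sep p; rewrite in_setU1 pT orbT.
by rewrite in_setU1; case: eqP => [->|_] //=; apply: sep_T.
Qed.

Lemma separates_comp m m' (g : 'I_m -> 'I_m') (psi : 'I_m' -> N) T :
  separates (fun x => psi (g x)) T = separates psi [set (g q.1, g q.2) | q in T].
Proof.
apply/forallP/forallP => sep p.
  by apply/implyP => /imsetP [q qT ->] /=; have := sep q; rewrite qT.
apply/implyP => pT; have := sep (g p.1, g p.2).
by rewrite (imset_f (fun q => (g q.1, g q.2)) pT).
Qed.

Lemma separates_ffun m (f : 'I_m -> N) T : separates [ffun x => f x] T = separates f T.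
Proof. by apply: eq_forallb => q; rewrite !ffunE. Qed.

Lemma separates_offdiag m (phi : 'I_m -> N) : separates phi (offdiag m) = injectiveb phi.
Proof.
apply/forallP/injectiveP => [sep x y phi_xy|phi_inj p].
  by apply/eqP; apply: contraLR (sep (x, y)); rewrite inE /= phi_xy eqxx => ->.
by rewrite inE; apply/implyP; apply: contra => /eqP /phi_inj ->.
Qed.

Lemma PH_PHsep0 H (X : M) : PH H X = PHsep (H := H) set0 X.
Proof.
apply/matrixP => i k; rewrite !mxE; apply: eq_bigl => phi.
suff -> : separates phi set0 by rewrite andbT.
by apply/forallP => p; rewrite in_set0.
Qed.

(* Maps identifying [u] and [v] are the maps of the graph with [v] merged into [u]. *)
Lemma PHsep_split H (u v : 'I_(mg_m H)) (uv : u != v) T X :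
  PHsep T X = PHsep ((u, v) |: T) X +
              PHsep (H := mg_image (merge uv)) [set (merge uv q.1, merge uv q.2) | q in T] X.
Proof.
apply/matrixP => i k; rewrite !mxE.
rewrite (bigID (fun phi : {ffun _} => phi u == phi v)) /= addrC; congr (_ + _).
  apply: eq_bigl => phi; rewrite separatesU1 /=.
  by case: (phi u == phi v); rewrite ?andbF ?andbT.
rewrite (reindex_onto (fun psi : {ffun 'I_(mg_m H).-1 -> N} => [ffun x => psi (merge uv x)])
                      (fun phi => [ffun y => phi (lift v y)])); last first.
  move=> phi /andP [_ /eqP phi_uv]; apply/ffunP => x; rewrite !ffunE lift_merge.
  by case: eqP => [->|].
apply: eq_big => [psi|psi _]; last first.
  by rewrite /hom_weight big_map; apply: eq_bigr => e _; rewrite !ffunE.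
rewrite !ffunE merge_uv eqxx !andbT separates_ffun separates_comp.
have -> : [ffun y => [ffun x => psi (merge uv x)] (lift v y)] == psi.
  by apply/eqP/ffunP => y; rewrite !ffunE merge_lift.
by rewrite andbT.
Qed.

Lemma PHinj_eq0 H X : (n < mg_m H)%N -> PHinj H X = 0.
Proof.
move=> n_lt; apply/matrixP => i k; rewrite !mxE big1 // => phi /andP [_].
rewrite separates_offdiag => /injectiveP /leq_card; rewrite !card_ord => le_m.
by move: n_lt; rewrite ltnNge le_m.
Qed.


Lemma card_inj_extensions m (w : 'I_m) (psi : {ffun 'I_m.-1 -> N}) : injective psi ->
  #|[pred phi : {ffun 'I_m -> N} | injectiveb phi && ([ffun y => phi (lift w y)] == psi)]|
  = (n - m.-1)%N.
Proof.
move=> psi_inj.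
pose ext x : {ffun 'I_m -> N} := [ffun z => if unlift w z is Some y then psi y else x].
have ext_lift x y : ext x (lift w y) = psi y by rewrite ffunE liftK.
have ext_w x : ext x w = x by rewrite ffunE unlift_none.
have ext_inj : injective ext.
  by move=> x y /(congr1 (fun f : {ffun 'I_m -> N} => f w)); rewrite !ext_w.
have -> : #|[pred phi : {ffun 'I_m -> N} | injectiveb phi && ([ffun y => phi (lift w y)] == psi)]|
          = #|ext @: ~: [set y in codom psi]|.
  apply: eq_card => phi; rewrite inE /=; apply/andP/imsetP => [[/injectiveP phi_inj /eqP phi_psi]|].
    exists (phi w).
      rewrite !inE; apply/codomP => -[y]; rewrite -phi_psi ffunE => /phi_inj /eqP.
      by rewrite (negbTE (neq_lift w y)).
    apply/ffunP => z; case: (unliftP w z) => [y ->|->]; rewrite ?ext_lift ?ext_w //.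
    by rewrite -phi_psi ffunE.
  move=> [x]; rewrite !inE => x_new ->; split; last first.
    by apply/eqP/ffunP => y; rewrite ffunE ext_lift.
  apply/injectiveP => z1 z2.
  case: (unliftP w z1) => [y1 ->|->]; case: (unliftP w z2) => [y2 ->|->];
    rewrite ?ext_lift ?ext_w //.
  - by move/psi_inj ->.
  - by move=> x_psi; move: x_new; rewrite -x_psi codom_f.
  - by move=> x_psi; move: x_new; rewrite x_psi codom_f.
rewrite card_imset //; have := cardsC [set y in codom psi].
by rewrite cardsE card_codom // !card_ord => /(congr1 (subn^~ m.-1)); rewrite addKn.
Qed.

Lemma PHinj_remove_isolated H (w : 'I_(mg_m H)) (aw : mg_a H != w) (bw : mg_b H != w) X :
  mg_isolated w -> PHinj H X = (n - (mg_m H).-1)%:R *: PHinj (mg_image (merge aw)) X.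
Proof.
move=> w_isolated; apply/matrixP => i k; rewrite !mxE.
set g := merge aw.
have gK z : z != w -> lift w (g z) = z := merge_id aw (x := z).
have E_avoid e : e \in mg_E H -> (e.1 != w) && (e.2 != w).
  by move=> eE; move/hasPn: w_isolated => /(_ e eE); rewrite negb_or.
pose restr (phi : {ffun 'I_(mg_m H) -> N}) : {ffun 'I_(mg_m H).-1 -> N} :=
  [ffun y => phi (lift w y)].
have restr_g phi z : z != w -> restr phi (g z) = phi z by move=> zw; rewrite ffunE gK.
rewrite (partition_big restr (fun psi => (psi (g (mg_a H)) == i) &&
           (psi (g (mg_b H)) == k) && separates psi (offdiag _))) /=; last first.
  move=> phi /andP [/andP [phi_a phi_b]]; rewrite !restr_g // phi_a phi_b !separates_offdiag.
  move/injectiveP => phi_inj; apply/injectiveP => y1 y2; rewrite !ffunE.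
  by move/phi_inj/lift_inj.
rewrite mulr_sumr; apply: eq_bigr => psi /andP [/andP [psi_a psi_b]].
rewrite separates_offdiag => /injectiveP psi_inj.
rewrite (eq_bigr (fun _ => hom_weight (H := mg_image g) X psi)); last first.
  move=> phi /andP [_ /eqP <-]; rewrite /hom_weight big_map big_seq [RHS]big_seq.
  by apply: eq_bigr => e /E_avoid /andP [e1 e2]; rewrite !restr_g.
rewrite sumr_const mulr_natl -(card_inj_extensions w psi_inj); congr (_ *+ _).
apply: eq_card => phi; rewrite !unfold_in /= separates_offdiag -/(restr phi).
case: (restr phi =P psi) => [restr_psi|]; rewrite ?andbF ?andbT //.
by rewrite -(restr_g phi (mg_a H)) // -(restr_g phi (mg_b H)) // restr_psi psi_a psi_b.
Qed.

Definition in_span (F : M -> M) : Prop :=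
  exists k (Hs : 'I_k -> mgraph) (c : 'I_k -> R),
    (forall i, inB n d (Hs i)) /\ forall X, F X = \sum_(i < k) c i *: PH (Hs i) X.

Lemma in_span_ext F G : (forall X, F X = G X) -> in_span F -> in_span G.
Proof. by move=> FG [k [Hs [c [Hs_inB F_sum]]]]; exists k, Hs, c; split => // X; rewrite -FG. Qed.

Lemma in_span0 : in_span (fun _ => 0).
Proof.
exists 0%N, (fun _ => @MGraph 1 [::] ord0 ord0), (fun _ => 0).
by split => [[]|X]; rewrite ?big_ord0.
Qed.

Lemma in_spanD F G : in_span F -> in_span G -> in_span (fun X => F X + G X).
Proof.
move=> [k1 [H1 [c1 [H1_inB F_sum]]]] [k2 [H2 [c2 [H2_inB G_sum]]]].
exists (k1 + k2)%N, (fun i => match split i with inl j => H1 j | inr j => H2 j end),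
  (fun i => match split i with inl j => c1 j | inr j => c2 j end).
split => [i|X]; first by case: (split i).
rewrite big_split_ord /= F_sum G_sum.
congr (_ + _); apply: eq_bigr => i _.
  by rewrite (_ : split _ = inl i) // (unsplitK (inl i : 'I_k1 + 'I_k2)).
by rewrite (_ : split _ = inr i) // (unsplitK (inr i : 'I_k1 + 'I_k2)).
Qed.

Lemma in_spanZ a F : in_span F -> in_span (fun X => a *: F X).
Proof.
move=> [k [Hs [c [Hs_inB F_sum]]]]; exists k, Hs, (fun i => a * c i); split => // X.
by rewrite F_sum scaler_sumr; apply: eq_bigr => i _; rewrite scalerA.
Qed.

Lemma in_spanB F G : in_span F -> in_span G -> in_span (fun X => F X - G X).
Proof.
move=> F_span G_span; apply: in_span_ext (in_spanD F_span (in_spanZ (-1) G_span)) => X.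
by rewrite scaleN1r.
Qed.

Lemma in_span_sum (I : eqType) (r : seq I) (F : I -> M -> M) :
  (forall i, i \in r -> in_span (F i)) -> in_span (fun X => \sum_(i <- r) F i X).
Proof.
elim: r => [|i r IH] F_span; first by apply: in_span_ext in_span0 => X; rewrite big_nil.
apply: in_span_ext (in_spanD (F_span i (mem_head _ _)) (IH _)) => [X|j jr].
  by rewrite big_cons.
by apply: F_span; rewrite in_cons jr orbT.
Qed.

Lemma in_span_PH H : inB n d H -> in_span (PH H).
Proof.
by move=> H_inB; exists 1%N, (fun _ => H), (fun _ => 1); split => // X; rewrite big_ord1 scale1r.
Qed.

Section Induction.
Variable H : mgraph.
Hypothesis H_size : (size (mg_E H) <= d)%N.
Hypothesis IH : forall H' : mgraph, (mg_m H' < mg_m H)%N -> (size (mg_E H') <= d)%N ->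
  forall T : {set 'I_(mg_m H') * 'I_(mg_m H')},
    T \subset offdiag (mg_m H') -> in_span (PHsep T).

Lemma image_size_le m (g : 'I_(mg_m H) -> 'I_m) : (size (mg_E (mg_image g)) <= d)%N.
Proof. by rewrite size_map. Qed.

Lemma merge_lt (u v : 'I_(mg_m H)) (uv : u != v) : (mg_m (mg_image (merge uv)) < mg_m H)%N.
Proof. by rewrite /= ltn_predL; apply: leq_ltn_trans (ltn_ord u). Qed.

(* Inclusion-exclusion over the pairs not yet separated, by [PHsep_split]. *)
Lemma PHsep_sub_PHinj_in_span c T :
  #|offdiag (mg_m H) :\: T| = c -> T \subset offdiag (mg_m H) ->
  in_span (fun X => PHsep T X - PHinj H X).
Proof.
elim: c T => [|c IHc] T card_T T_sub.
  have -> : T = offdiag _ by apply/eqP; rewrite eqEsubset T_sub -setD_eq0 -cards_eq0 card_T.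
  by apply: in_span_ext in_span0 => X; rewrite subrr.
have /set0Pn [[u v]] : offdiag (mg_m H) :\: T != set0 by rewrite -card_gt0 card_T.
rewrite !inE /= => /andP [uvT uv].
have card_uvT : #|offdiag (mg_m H) :\: ((u, v) |: T)| = c.
  move: card_T; rewrite (cardsD1 (u, v)) !inE uvT uv => -[<-].
  by apply: eq_card => p; rewrite !inE negb_or andbA [~~ _ && _]andbC.
have uvT_sub : (u, v) |: T \subset offdiag (mg_m H) by rewrite subUset sub1set inE uv T_sub.
have uvT_span := IHc _ card_uvT uvT_sub.
have [vuT|vuT] := boolP ((v, u) \in T).
  apply: in_span_ext uvT_span => X; congr (_ - _); apply/matrixP => i k; rewrite !mxE.
  apply: eq_bigl => phi; rewrite separatesU1 /=.
  case sep_T: (separates phi T); rewrite ?andbF //.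
  by move/forallP: sep_T => /(_ (v, u)); rewrite vuT /= eq_sym => ->.
have merged_span := IH (merge_lt uv) (image_size_le _) (merge_offdiag_sub uv T_sub uvT vuT).
apply: in_span_ext (in_spanD uvT_span merged_span) => X.
by rewrite [PHsep T X](PHsep_split uv) addrAC.
Qed.

Lemma PHinj_in_span : in_span (PHinj H).
Proof.
have [n_lt|H_le_n] := ltnP n (mg_m H).
  by apply: in_span_ext in_span0 => X; rewrite PHinj_eq0.
have [/existsP [w /andP [/andP [wa wb] w_isolated]]|no_isolated] :=
  boolP [exists w, (w != mg_a H) && (w != mg_b H) && mg_isolated w].
  rewrite eq_sym in wa; rewrite eq_sym in wb.
  have merged_span := IH (merge_lt wa) (image_size_le _) (subxx (offdiag _)).
  apply: in_span_ext (in_spanZ (n - (mg_m H).-1)%:R merged_span) => X.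
  by rewrite (PHinj_remove_isolated wa wb X w_isolated).
have H_inB : inB n d H.
  have not_isolated v : v != mg_a H -> v != mg_b H -> ~~ mg_isolated v.
    by move=> va vb; move: no_isolated; rewrite negb_exists => /forallP /(_ v); rewrite va vb.
  split => //; rewrite leq_min H_le_n /= (leq_trans (mg_m_le_size_E not_isolated)) //.
  by rewrite leq_add2l leq_mul2l H_size orbT.
have sep0_span := PHsep_sub_PHinj_in_span erefl (sub0set _).
apply: in_span_ext (in_spanB (in_span_PH H_inB) sep0_span) => X.
by rewrite PH_PHsep0 opprB addrC subrK.
Qed.

End Induction.

Lemma PHsep_in_span H (T : {set 'I_(mg_m H) * 'I_(mg_m H)}) :
  (size (mg_E H) <= d)%N -> T \subset offdiag (mg_m H) -> in_span (PHsep T).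
Proof.
have [m] := ubnP (mg_m H); elim: m H T => // m IH H T H_lt H_size T_sub.
have IH' H' : (mg_m H' < mg_m H)%N -> (size (mg_E H') <= d)%N ->
    forall T' : {set 'I_(mg_m H') * 'I_(mg_m H')},
      T' \subset offdiag (mg_m H') -> in_span (PHsep T').
  by move=> H'_lt H'_size T'; apply: IH => //; apply: leq_trans H'_lt _.
apply: in_span_ext (in_spanD (PHsep_sub_PHinj_in_span H_size IH' erefl T_sub)
                             (PHinj_in_span H_size IH')) => X.
by rewrite subrK.
Qed.

Definition monomial_graph (a b : N) (al : {ffun N * N -> nat}) : mgraph :=
  @MGraph n (flatten [seq nseq (al ij) ij | ij : N * N <- index_enum _]) a b.

Lemma size_monomial_graph a b al : size (mg_E (monomial_graph a b al)) = mdeg al.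
Proof.
rewrite /= size_flatten sumnE /shape big_map big_map /mdeg.
by apply: eq_bigr => ij _; rewrite size_nseq.
Qed.

Lemma hom_weight_monomial_graph a b al X (phi : N -> N) :
  hom_weight (H := monomial_graph a b al) X phi =
  \prod_(ij : N * N) X (phi ij.1) (phi ij.2) ^+ al ij.
Proof.
rewrite /hom_weight big_flatten /= big_map; apply: eq_bigr => ij _.
by rewrite big_nseq iter_mulr_1.
Qed.

Definition perm_of_ffun (phi : {ffun N -> N}) : {perm N} := insubd (1%g : {perm N}) phi.

Lemma perm_of_ffunE (phi : {ffun N -> N}) x : injectiveb phi -> perm_of_ffun phi x = phi x.
Proof. by move=> phi_inj; rewrite -pvalE /perm_of_ffun insubdK. Qed.

Lemma perm_of_ffun_perm (g : {perm N}) : perm_of_ffun [ffun x => g x] = g.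
Proof.
apply/permP => x; rewrite perm_of_ffunE ?ffunE //.
by apply/injectiveP => y z; rewrite !ffunE; apply: perm_inj.
Qed.

Lemma sum_monomial_Sact a b al X (i k : N) :
  \sum_(g : {perm N} | (g i == a) && (g k == b)) monomial al (Sact g X) =
  PHinj (monomial_graph a b al) X i k.
Proof.
rewrite mxE (reindex_onto (fun g : {perm N} => [ffun x => (g^-1)%g x])
                          (fun phi : {ffun N -> N} => (perm_of_ffun phi)^-1)%g); last first.
  move=> phi /andP [_]; rewrite separates_offdiag => phi_inj.
  by apply/ffunP => x; rewrite ffunE invgK perm_of_ffunE.
apply: eq_big => [g|g _].
  rewrite /= !ffunE perm_of_ffun_perm invgK eqxx andbT separates_offdiag.
  have -> : injectiveb [ffun x => (g^-1)%g x].
    by apply/injectiveP => y z; rewrite !ffunE; apply: perm_inj.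
  by rewrite andbT !(canF_eq (permK g)) (eq_sym i) (eq_sym k).
rewrite hom_weight_monomial_graph /monomial; apply: eq_bigr => ij _.
by rewrite !ffunE mxE.
Qed.

Lemma sum_perm_pairs (F : {perm N} -> N -> N -> R) (i k : N) :
  \sum_(a : N) \sum_(b : N) \sum_(g : {perm N} | (g i == a) && (g k == b)) F g a b
  = \sum_(g : {perm N}) F g (g i) (g k).
Proof.
rewrite pair_big /= (partition_big (fun g : {perm N} => (g i, g k)) predT) //=.
by apply: eq_bigr => -[a b] _; apply: eq_big => [g|g /andP [/eqP <- /eqP <-]].
Qed.

(* Reynolds averaging: an equivariant [P] is the average of [g^-1 . P (g . X)]. *)
Lemma equivariant_in_span (P : M -> M) : polymap_deg_le d P -> equivariant P -> in_span P.
Proof.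
move=> P_poly P_equiv.
pose c : R := (n`!)%:R^-1.
pose Q (a b : N) (X : M) : M := \matrix_(i, k)
   (c * \sum_(g : {perm N} | (g i == a) && (g k == b)) P (Sact g X) a b).
have P_Q X : \sum_(a : N) \sum_(b : N) Q a b X = P X.
  apply/matrixP => i k; rewrite summxE; under eq_bigr do rewrite summxE.
  under eq_bigr do under eq_bigr do rewrite mxE.
  under eq_bigr do rewrite -mulr_sumr.
  rewrite -mulr_sumr sum_perm_pairs.
  under eq_bigr do rewrite P_equiv mxE !permK.
  rewrite sumr_const card_Sn -mulr_natl mulrA mulVf ?mul1r //.
  by rewrite pnatr_eq0 -lt0n fact_gt0.
apply: in_span_ext P_Q _; apply: in_span_sum => a _; apply: in_span_sum => b _.
have [s [s_deg P_s]] := P_poly a b.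
have Q_s X : \sum_(p <- s) (c * p.1) *: PHinj (monomial_graph a b p.2) X = Q a b X.
  apply/matrixP => i k; rewrite summxE mxE.
  under [in RHS]eq_bigr do rewrite P_s.
  rewrite [X in _ = c * X]exchange_big mulr_sumr; apply: eq_bigr => p _.
  by rewrite mxE -sum_monomial_Sact -mulrA mulr_sumr.
apply: in_span_ext Q_s _; apply: in_span_sum => p p_s; apply: in_spanZ.
apply: PHsep_in_span (subxx _).
by rewrite size_monomial_graph (allP s_deg p p_s).
Qed.
End Span.

Theorem theorem1 (R : realType) (n d : nat) (hn : (1 <= n)%N) :
  (forall H : mgraph, inB n d H ->
     polymap_deg_le d (@PH R n H) /\ equivariant (@PH R n H))
  /\
  (forall (k : nat) (Hs : 'I_k -> mgraph) (c : 'I_k -> R),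
     (forall i, inB n d (Hs i)) ->
     (forall i j, i != j -> ~ mg_iso (Hs i) (Hs j)) ->
     (forall X : 'M[R]_n, \sum_(i < k) c i *: PH (Hs i) X = 0) ->
     forall i, c i = 0)
  /\
  (forall P : 'M[R]_n -> 'M[R]_n,
     polymap_deg_le d P -> equivariant P ->
     exists (k : nat) (Hs : 'I_k -> mgraph) (c : 'I_k -> R),
       (forall i, inB n d (Hs i)) /\
       forall X : 'M[R]_n, P X = \sum_(i < k) c i *: PH (Hs i) X).
Proof.
split; first by move=> H [_ H_size _]; split; [exact: PH_polymap | exact: PH_equivariant].
split; first exact: PH_free.
exact: equivariant_in_span.
Qed.
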